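(* Let $S$ be a finite set of $m\ge 1$ discrete probability distributions and let $\mathcal G_S$ be the output of the greedy coupling algorithm on $S$. Then $$H(\mathcal G_S)\le H(\textsc{Profile}_S)+\frac{1+\log_2 e}{2}.$$
   Context: Distributions are finite vectors of nonnegative reals summing to $1$, with states sorted in non-increasing order. Greedy coupling algorithm: maintain the remaining masses of the states of each distribution in $S$. Repeatedly: let $r=\min_{p\in S}\max_j p(j)$; if $r=0$ stop; otherwise append $r$ as the next state of $\mathcal G_S$ and subtract $r$ from the largest remaining state of every distribution in $S$ (ties broken arbitrarily). $\mathcal G_S$ is the resulting sequence of state masses, with $H(\mathcal G_S)=\sum_t \mathcal G_S(t)\log_2(1/\mathcal G_S(t))$. For a distribution $p$, $\textsc{Sketch}_p:(0,1]\to\mathbb R$ is $\textsc{Sketch}_p(x)=p(i)$ for $x\in(\sum_{j>i}p(j),\sum_{j\ge i}p(j)]$; $\textsc{Profile}_S(x)=\min_{p\in S}\textsc{Sketch}_p(x)$; and $H(\textsc{Profile}_S)=\int_0^{1}\log_2(1/\textsc{Profile}_S(x))\,dx$. *)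

From Stdlib Require Import Reals List Sorting.Sorted.
From Coquelicot Require Import Coquelicot.
Import ListNotations.
Open Scope R_scope.

Definition log2 (y : R) : R := ln y / ln 2.

Definition suml (l : list R) : R := fold_right Rplus 0 l.

(* A distribution: finite vector of nonnegative reals summing to 1,
   states sorted in non-increasing order (state i = nth i p 0, 0-indexed). *)
Definition is_distr (p : list R) : Prop :=
  List.Forall (fun a : R => (0 <= a)%R) p /\ suml p = 1 /\ Sorted (fun a b : R => (a >= b)%R) p.

(* Sketch_p(x) = p(i) for x in (sum_{j>i} p(j), sum_{j>=i} p(j)].
   Written recursively: for p = a :: q, x lies in the interval of the first
   state iff x > sum q (= sum_{j>0} p(j)); otherwise recurse on the tail.
   (Value 0 outside (0,1], which is irrelevant.) *)
Fixpoint Sketch (p : list R) (x : R) : R :=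
  match p with
  | [] => 0
  | a :: q => if Rlt_dec (suml q) x then a else Sketch q x
  end.

Definition Profile (S : list (list R)) (x : R) : R :=
  match S with
  | [] => 0
  | p :: S' => fold_right (fun q acc => Rmin (Sketch q x) acc) (Sketch p x) S'
  end.

Definition H_Profile (S : list (list R)) : R :=
  RInt (fun x => log2 (/ Profile S x)) 0 1.

Definition H_seq (g : list R) : R :=
  fold_right (fun a acc => a * log2 (/ a) + acc) 0 g.

Definition maxl (p : list R) : R := fold_right Rmax 0 p.

Definition minmax (st : list (list R)) : R :=
  match st with
  | [] => 0
  | p :: st' => fold_right (fun q acc => Rmin (maxl q) acc) (maxl p) st'
  end.

Fixpoint replace_nth (i : nat) (v : R) (l : list R) : list R :=
  match l, i with
  | [], _ => []
  | _ :: q, O => v :: q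
  | a :: q, S i' => a :: replace_nth i' v q
  end.

Definition sub_largest (r : R) (p p' : list R) : Prop :=
  exists i, (i < length p)%nat /\ nth i p 0 = maxl p /\
            p' = replace_nth i (nth i p 0 - r) p.

(* greedy_run st g : starting from remaining masses st, the greedy algorithm
   (with some choice of tie-breaking) outputs the sequence of state masses g. *)
Inductive greedy_run : list (list R) -> list R -> Prop :=
| greedy_stop : forall st, minmax st = 0 -> greedy_run st []
| greedy_step : forall st st' g,
    minmax st <> 0 ->
    List.Forall2 (sub_largest (minmax st)) st st' ->
    greedy_run st' g ->
    greedy_run st (minmax st :: g).

From Stdlib Require Import Reals List Lra Lia.
From Coquelicot Require Import Coquelicot.
Import ListNotations.
Open Scope R_scope.

(* For 0 < t <= 1, -ln t is the integral over v in (0,1) of [v >= t]/v, so the (natural-log)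
   entropy of the greedy output is the integral of (1 - M(v))/v, where M(v) is the total mass of
   the greedy states larger than v.  Likewise (1 + ln 2)/2 - ln u is the integral of
   (1 - W_v(u))/v with W_v(u) = 0, 1/2 or 1 - v/u according as u <= v, v < u <= 2v or 2v < u.
   It therefore suffices that the profile satisfies, for every v, the integral of W_v(Profile)
   is at most M(v).  Stop the greedy run at the first step of size <= v and pick a distribution
   p whose largest remaining state is then <= v.  Each state of p of mass u has lost at least
   u W_v(u), in steps of size > v, which are greedy states larger than v; and since
   Profile <= Sketch_p and W_v is nondecreasing, the integral of W_v(Profile) is at most
   sum_i p(i) W_v(p(i)) <= M(v). *)

Definition sumf {A : Type} (f : A -> R) (l : list A) : R :=
  fold_right (fun x acc => f x + acc) 0 l.

Lemma suml_sumf (l : list R) : suml l = sumf (fun x => x) l.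
Proof. reflexivity. Qed.

Lemma sumf_ext_in {A : Type} (f h : A -> R) (l : list A) :
  (forall x, In x l -> f x = h x) -> sumf f l = sumf h l.
Proof.
  induction l as [|x l IH]; simpl; intros E; [reflexivity|].
  rewrite E, IH by auto. reflexivity.
Qed.

Lemma sumf_plus {A : Type} (f h : A -> R) (l : list A) :
  sumf (fun x => f x + h x) l = sumf f l + sumf h l.
Proof. induction l as [|x l IH]; simpl; [ring|]. rewrite IH. ring. Qed.

Lemma sumf_scal {A : Type} (c : R) (f : A -> R) (l : list A) :
  sumf (fun x => c * f x) l = c * sumf f l.
Proof. induction l as [|x l IH]; simpl; [ring|]. rewrite IH. ring. Qed.

Lemma sumf_minus {A : Type} (f h : A -> R) (l : list A) :
  sumf (fun x => f x - h x) l = sumf f l - sumf h l.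
Proof. induction l as [|x l IH]; simpl; [ring|]. rewrite IH. ring. Qed.

Lemma sumf_app {A : Type} (f : A -> R) (l1 l2 : list A) :
  sumf f (l1 ++ l2) = sumf f l1 + sumf f l2.
Proof. induction l1 as [|x l1 IH]; simpl; [ring|]. rewrite IH. ring. Qed.

Lemma sumf_nonneg {A : Type} (f : A -> R) (l : list A) :
  (forall x, In x l -> 0 <= f x) -> 0 <= sumf f l.
Proof.
  induction l as [|x l IH]; simpl; intros H; [lra|].
  pose proof (H x (or_introl eq_refl)). pose proof (IH (fun y Hy => H y (or_intror Hy))). lra.
Qed.

Lemma suml_nonneg (l : list R) : List.Forall (fun a => 0 <= a) l -> 0 <= suml l.
Proof. intros Hl. rewrite suml_sumf. apply sumf_nonneg, Forall_forall, Hl. Qed.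

Lemma in_le_suml (l : list R) (t : R) : (forall x, In x l -> 0 <= x) -> In t l -> t <= suml l.
Proof.
  intros Hl Ht. rewrite suml_sumf. induction l as [|a l IH]; [destruct Ht|]. simpl.
  assert (0 <= sumf (fun x => x) l) by (apply sumf_nonneg; intros; apply Hl; right; auto).
  pose proof (Hl a (or_introl eq_refl)).
  destruct Ht as [<-|Ht]; [lra|]. pose proof (IH (fun y Hy => Hl y (or_intror Hy)) Ht). lra.
Qed.

(** * Riemann integrals of step functions *)

Lemma is_RInt_ext_on (f h : R -> R) (a b l : R) : a <= b ->
  (forall x, a < x < b -> f x = h x) -> is_RInt h a b l -> is_RInt f a b l.
Proof.
  intros Hab E. apply is_RInt_ext. intros x Hx.
  rewrite Rmin_left, Rmax_right in Hx by lra. symmetry. apply E. exact Hx.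
Qed.

Lemma is_RInt_const_on (h : R -> R) (a b c : R) : a <= b ->
  (forall x, a < x < b -> h x = c) -> is_RInt h a b ((b - a) * c).
Proof. intros Hab E. apply (is_RInt_ext_on h (fun _ => c)); auto. exact (is_RInt_const a b c). Qed.

Lemma is_RInt_sumf {A : Type} (F : A -> R -> R) (I : A -> R) (l : list A) (a b : R) :
  (forall x, In x l -> is_RInt (F x) a b (I x)) ->
  is_RInt (fun v => sumf (fun x => F x v) l) a b (sumf I l).
Proof.
  induction l as [|x l IH]; simpl; intros H.
  - assert (I0 : is_RInt (fun _ => 0) a b ((b - a) * 0)) by exact (is_RInt_const a b 0).
    rewrite Rmult_0_r in I0. exact I0.
  - exact (is_RInt_plus _ _ _ _ _ _ (H x (or_introl eq_refl))
             (IH (fun y Hy => H y (or_intror Hy)))).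
Qed.

Definition no_point_between (l : list R) (x y : R) : Prop :=
  forall z, In z l -> ~ (Rmin x y <= z <= Rmax x y).

Lemma not_between (x y z : R) :
  (z < x /\ z < y) \/ (x < z /\ y < z) -> ~ (Rmin x y <= z <= Rmax x y).
Proof. unfold Rmin, Rmax; destruct Rle_dec; lra. Qed.

Lemma no_point_between_cons (z : R) (l : list R) (x y : R) :
  (z < x /\ z < y) \/ (x < z /\ y < z) -> no_point_between l x y -> no_point_between (z :: l) x y.
Proof. intros Hz Hl w [<-|Hw]; [apply not_between|apply Hl]; auto. Qed.

(* [L] lists the pieces of [a, b] cut out by [l] as (length, sample point) pairs. *)
Lemma is_RInt_step_function (l : list R) (f : R -> R) : forall a b, a <= b ->
  (forall x y, a < x < b -> a < y < b -> no_point_between l x y -> f x = f y) ->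
  exists L : list (R * R), (forall wx, In wx L -> a < snd wx < b) /\
    forall phi : R -> R,
      is_RInt (fun x => phi (f x)) a b (sumf (fun wx => fst wx * phi (f (snd wx))) L).
Proof.
  induction l as [|z l IH]; intros a b Hab Hf.
  - destruct (Req_dec a b) as [<-|Hne].
    + exists []. split; [simpl; tauto|]. intros phi. exact (is_RInt_point _ _).
    + exists [(b - a, (a + b) / 2)]. split; [intros wx [<-|[]]; simpl; lra|].
      intros phi. simpl. rewrite Rplus_0_r. apply is_RInt_const_on; [exact Hab|].
      intros x Hx. f_equal. apply Hf; try lra. intros w [].
  - assert (Hsplit : forall c d, a <= c -> d <= b -> c <= d -> z <= c \/ d <= z ->
              exists L : list (R * R), (forall wx, In wx L -> c < snd wx < d) /\
              forall phi : R -> R,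
                is_RInt (fun x => phi (f x)) c d (sumf (fun wx => fst wx * phi (f (snd wx))) L)).
    { intros c d Hac Hdb Hcd Hz. apply IH; [exact Hcd|].
      intros x y Hx Hy Hn. apply Hf; try lra. apply no_point_between_cons; [lra|exact Hn]. }
    destruct (Rlt_dec a z) as [Haz|Haz]; [destruct (Rlt_dec z b) as [Hzb|Hzb]|].
    + destruct (Hsplit a z) as [L1 [HL1 I1]]; try lra.
      destruct (Hsplit z b) as [L2 [HL2 I2]]; try lra.
      exists (L1 ++ L2). split.
      * intros wx Hwx. apply in_app_or in Hwx.
        destruct Hwx as [H|H]; [apply HL1 in H|apply HL2 in H]; lra.
      * intros phi. rewrite sumf_app. exact (is_RInt_Chasles _ a z b _ _ (I1 phi) (I2 phi)).
    + apply Hsplit; lra.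
    + apply Hsplit; lra.
Qed.

(** * Sketches and profiles *)

Lemma fold_Rmin_le {A : Type} (f : A -> R) (p : A) (l : list A) (q : A) :
  In q (p :: l) -> fold_right (fun q acc => Rmin (f q) acc) (f p) l <= f q.
Proof.
  induction l as [|r l IH]; simpl; intros Hq.
  - destruct Hq as [<-|[]]. lra.
  - destruct Hq as [<-|[<-|Hq]].
    + eapply Rle_trans; [apply Rmin_r|]. apply IH. left; reflexivity.
    + apply Rmin_l.
    + eapply Rle_trans; [apply Rmin_r|]. apply IH. right; exact Hq.
Qed.

Lemma fold_Rmin_attained {A : Type} (f : A -> R) (p : A) (l : list A) :
  exists q, In q (p :: l) /\ fold_right (fun q acc => Rmin (f q) acc) (f p) l = f q.
Proof.
  induction l as [|r l [q [Hq E]]]; simpl.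
  - exists p; auto.
  - unfold Rmin at 1; destruct Rle_dec.
    + exists r; simpl; auto.
    + exists q. rewrite E. split; [simpl in Hq |- *; tauto|reflexivity].
Qed.

Lemma fold_Rmin_ext {A : Type} (f h : A -> R) (p : A) (l : list A) :
  (forall q, In q (p :: l) -> f q = h q) ->
  fold_right (fun q acc => Rmin (f q) acc) (f p) l =
  fold_right (fun q acc => Rmin (h q) acc) (h p) l.
Proof.
  induction l as [|r l IH]; simpl; intros E.
  - apply E. left; reflexivity.
  - rewrite (E r), IH; [reflexivity| |simpl; tauto].
    intros q Hq. apply E. simpl in *; tauto.
Qed.

Lemma Profile_le_Sketch (S : list (list R)) (q : list R) (x : R) :
  In q S -> Profile S x <= Sketch q x.
Proof. destruct S as [|p S']; [destruct 1|]. exact (fold_Rmin_le (fun q => Sketch q x) p S' q). Qed.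

Lemma Profile_attained (S : list (list R)) (x : R) :
  S <> [] -> exists q, In q S /\ Profile S x = Sketch q x.
Proof.
  destruct S as [|p S']; [tauto|]. intros _. exact (fold_Rmin_attained (fun q => Sketch q x) p S').
Qed.

Fixpoint tail_sums (p : list R) : list R :=
  match p with [] => [] | _ :: q => suml q :: tail_sums q end.

Lemma Sketch_const (p : list R) (x y : R) :
  no_point_between (tail_sums p) x y -> Sketch p x = Sketch p y.
Proof.
  induction p as [|a q IH]; simpl; intros H; [reflexivity|].
  assert (Hq : ~ (Rmin x y <= suml q <= Rmax x y)) by (apply H; left; reflexivity).
  destruct (Rlt_dec (suml q) x); destruct (Rlt_dec (suml q) y); try reflexivity.
  - exfalso. apply Hq. unfold Rmin, Rmax; destruct Rle_dec; lra.
  - exfalso. apply Hq. unfold Rmin, Rmax; destruct Rle_dec; lra.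
  - apply IH. intros z Hz. apply H. right; exact Hz.
Qed.

Lemma Profile_const (S : list (list R)) (x y : R) :
  no_point_between (flat_map tail_sums S) x y -> Profile S x = Profile S y.
Proof.
  destruct S as [|p S']; intros H; [reflexivity|].
  apply (fold_Rmin_ext (fun q => Sketch q x) (fun q => Sketch q y)).
  intros q Hq. apply Sketch_const. intros z Hz. apply H. apply in_flat_map. eauto.
Qed.

Lemma Sketch_le_suml (p : list R) (x : R) :
  List.Forall (fun a => 0 <= a) p -> Sketch p x <= suml p.
Proof.
  induction 1 as [|a q Ha Hq IH]; simpl; [lra|].
  pose proof (suml_nonneg q Hq).
  destruct Rlt_dec; change (fold_right Rplus 0 q) with (suml q); lra.
Qed.

Lemma Sketch_pos (p : list R) (x : R) :
  List.Forall (fun a => 0 <= a) p -> 0 < x <= suml p -> 0 < Sketch p x.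
Proof.
  induction 1 as [|a q Ha Hq IH]; simpl; intros Hx; [lra|].
  change (fold_right Rplus 0 q) with (suml q) in Hx.
  destruct Rlt_dec; [lra|]. apply IH. lra.
Qed.

Lemma is_RInt_Sketch (phi : R -> R) (p : list R) : List.Forall (fun a => 0 <= a) p ->
  is_RInt (fun x => phi (Sketch p x)) 0 (suml p) (sumf (fun a => a * phi a) p).
Proof.
  induction 1 as [|a q Ha Hq IH]; simpl.
  - exact (is_RInt_point _ _).
  - change (fold_right Rplus 0 q) with (suml q).
    pose proof (suml_nonneg q Hq).
    assert (I1 : is_RInt (fun x => phi (if Rlt_dec (suml q) x then a else Sketch q x))
                   0 (suml q) (sumf (fun a => a * phi a) q)).
    { apply (is_RInt_ext_on _ (fun x => phi (Sketch q x))); [lra| |exact IH].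
      intros x Hx. destruct Rlt_dec; [lra|reflexivity]. }
    assert (I2 : is_RInt (fun x => phi (if Rlt_dec (suml q) x then a else Sketch q x))
                   (suml q) (a + suml q) ((a + suml q - suml q) * phi a)).
    { apply is_RInt_const_on; [lra|]. intros x Hx. destruct Rlt_dec; [reflexivity|lra]. }
    replace (a * phi a + sumf (fun a => a * phi a) q)
      with (plus (sumf (fun a => a * phi a) q) ((a + suml q - suml q) * phi a))
      by (unfold plus; simpl; ring).
    exact (is_RInt_Chasles _ _ _ _ _ _ I1 I2).
Qed.

Lemma Profile_bounds (S : list (list R)) (x : R) :
  S <> [] -> List.Forall is_distr S -> 0 < x < 1 -> 0 < Profile S x <= 1.
Proof.
  intros Hne HS Hx. destruct (Profile_attained S x Hne) as [q [Hq ->]].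
  rewrite Forall_forall in HS. destruct (HS q Hq) as [Hnn [Hsum _]]. split.
  - apply Sketch_pos; [exact Hnn|lra].
  - rewrite <- Hsum. apply Sketch_le_suml. exact Hnn.
Qed.

Lemma is_RInt_Profile (S : list (list R)) : S <> [] -> List.Forall is_distr S ->
  exists L : list (R * R),
    sumf fst L = 1 /\ (forall wx, In wx L -> 0 < Profile S (snd wx) <= 1) /\
    forall phi : R -> R,
      is_RInt (fun x => phi (Profile S x)) 0 1
              (sumf (fun wx => fst wx * phi (Profile S (snd wx))) L).
Proof.
  intros Hne HS.
  destruct (is_RInt_step_function (flat_map tail_sums S) (Profile S) 0 1) as [L [HL HI]];
    [lra|intros x y _ _; apply Profile_const|].
  exists L. split; [|split; [intros wx Hwx; apply Profile_bounds; auto|exact HI]].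
  rewrite (sumf_ext_in _ (fun wx => fst wx * 1)) by (intros; ring).
  rewrite <- (is_RInt_unique _ _ _ _ (HI (fun _ => 1))).
  assert (I1 : is_RInt (fun _ => 1) 0 1 ((1 - 0) * 1)) by exact (is_RInt_const 0 1 1).
  rewrite (is_RInt_unique _ _ _ _ I1). ring.
Qed.

(** * Integral representations of the entropy terms *)

Lemma is_RInt_inv (a b : R) : 0 < a -> 0 < b -> is_RInt (fun v => / v) a b (ln b - ln a).
Proof.
  intros Ha Hb.
  assert (Hm : 0 < Rmin a b) by (unfold Rmin; destruct Rle_dec; lra).
  apply (is_RInt_derive ln (fun v => / v)).
  - intros x Hx. apply is_derive_ln. lra.
  - intros x Hx. apply continuous_Rinv. lra.
Qed.

Definition cut_inv (t v : R) : R := if Rle_dec t v then / v else 0.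

Definition smooth_inv (u v : R) : R :=
  if Rlt_dec v (u / 2) then / u else if Rlt_dec v u then / (2 * v) else / v.

Lemma is_RInt_cut_inv (t : R) : 0 < t <= 1 -> is_RInt (cut_inv t) 0 1 (- ln t).
Proof.
  intros Ht.
  assert (I1 : is_RInt (cut_inv t) 0 t ((t - 0) * 0)).
  { apply is_RInt_const_on; [lra|]. intros v Hv. unfold cut_inv. destruct Rle_dec; lra. }
  assert (I2 : is_RInt (cut_inv t) t 1 (ln 1 - ln t)).
  { apply (is_RInt_ext_on _ (fun v => / v)); [lra| |apply is_RInt_inv; lra].
    intros v Hv. unfold cut_inv. destruct Rle_dec; [reflexivity|lra]. }
  replace (- ln t) with (plus ((t - 0) * 0) (ln 1 - ln t))
    by (rewrite ln_1; unfold plus; simpl; ring).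
  exact (is_RInt_Chasles _ _ _ _ _ _ I1 I2).
Qed.

Lemma is_RInt_smooth_inv (u : R) : 0 < u <= 1 -> is_RInt (smooth_inv u) 0 1 ((1 + ln 2) / 2 - ln u).
Proof.
  intros Hu.
  assert (I1 : is_RInt (smooth_inv u) 0 (u / 2) ((u / 2 - 0) * / u)).
  { apply is_RInt_const_on; [lra|].
    intros v Hv. unfold smooth_inv. destruct Rlt_dec; [reflexivity|lra]. }
  assert (I2 : is_RInt (smooth_inv u) (u / 2) u (scal (/ 2) (ln u - ln (u / 2)))).
  { apply (is_RInt_ext_on _ (fun v => scal (/ 2) (/ v))); [lra| |].
    - intros v Hv. unfold smooth_inv, scal; simpl; unfold mult; simpl.
      destruct Rlt_dec; [lra|]. destruct Rlt_dec; [|lra]. rewrite Rinv_mult. reflexivity.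
    - exact (is_RInt_scal _ _ _ _ _ (is_RInt_inv (u / 2) u ltac:(lra) ltac:(lra))). }
  assert (I3 : is_RInt (smooth_inv u) u 1 (ln 1 - ln u)).
  { apply (is_RInt_ext_on _ (fun v => / v)); [lra| |apply is_RInt_inv; lra].
    intros v Hv. unfold smooth_inv. destruct Rlt_dec; [lra|]. destruct Rlt_dec; [lra|reflexivity]. }
  assert (Hln : ln (u / 2) = ln u - ln 2).
  { unfold Rdiv. rewrite ln_mult, ln_Rinv by (try apply Rinv_0_lt_compat; lra). ring. }
  replace ((1 + ln 2) / 2 - ln u)
    with (plus ((u / 2 - 0) * / u) (plus (scal (/ 2) (ln u - ln (u / 2))) (ln 1 - ln u)))
    by (rewrite Hln, ln_1; unfold plus, scal; simpl; unfold mult; simpl; field; lra).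
  exact (is_RInt_Chasles _ _ _ _ _ _ I1 (is_RInt_Chasles _ _ _ _ _ _ I2 I3)).
Qed.

(* A state of mass [u] that ends below [v] after losing only chunks of size at least [v] has lost
   at least [u * forced_share v u]. *)
Definition forced_share (v u : R) : R :=
  if Rle_dec u v then 0 else if Rle_dec u (2 * v) then / 2 else 1 - v / u.

Lemma mul_smooth_inv (u v : R) : 0 < u -> 0 < v -> v * smooth_inv u v = 1 - forced_share v u.
Proof.
  intros Hu Hv. unfold smooth_inv, forced_share.
  destruct (Rlt_dec v (u / 2)); [|destruct (Rlt_dec v u)];
    repeat (destruct Rle_dec; try lra); field; lra.
Qed.

Lemma forced_share_mono (v u1 u2 : R) : 0 < v -> u1 <= u2 -> forced_share v u1 <= forced_share v u2.
Proof.
  intros Hv H. unfold forced_share.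
  assert (Hdiv : 2 * v < u2 -> / 2 <= 1 - v / u2).
  { intros Hu2. apply Rmult_le_reg_l with (2 * u2); [lra|].
    replace (2 * u2 * (1 - v / u2)) with (2 * u2 - 2 * v) by (field; lra). lra. }
  assert (Hinv : 2 * v < u1 -> v / u2 <= v / u1).
  { intros Hu1. unfold Rdiv. apply Rmult_le_compat_l; [lra|]. apply Rinv_le_contravar; lra. }
  repeat destruct Rle_dec; lra.
Qed.

Definition mass_above (g : list R) (v : R) : R := sumf (fun t => if Rle_dec t v then 0 else t) g.

Lemma mass_above_nonneg (g : list R) (v : R) : 0 <= v -> 0 <= mass_above g v.
Proof. intros Hv. apply sumf_nonneg. intros t _. destruct Rle_dec; lra. Qed.

Lemma mul_cut_inv (t v : R) : 0 < v -> v * (t * cut_inv t v) = t - (if Rle_dec t v then 0 else t).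
Proof. intros Hv. unfold cut_inv. destruct Rle_dec; field; lra. Qed.

Lemma cut_inv_sum_le_smooth_inv_sum {A : Type} (g : list R) (L : list A) (w u : A -> R) (v : R) :
  0 < v -> suml g = 1 -> (forall i, In i L -> 0 < u i) -> sumf w L = 1 ->
  sumf (fun i => w i * forced_share v (u i)) L <= mass_above g v ->
  sumf (fun t => t * cut_inv t v) g <= sumf (fun i => w i * smooth_inv (u i) v) L.
Proof.
  intros Hv Hg1 Hu Hw1 Hshare. apply Rmult_le_reg_l with v; [exact Hv|].
  rewrite <- !sumf_scal.
  rewrite (sumf_ext_in _ (fun t => t - (if Rle_dec t v then 0 else t)))
    by (intros; apply mul_cut_inv, Hv).
  rewrite (sumf_ext_in _ (fun i => w i - w i * forced_share v (u i))).
  2:{ intros i Hi. pose proof (Hu i Hi).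
      replace (v * (w i * smooth_inv (u i) v)) with (w i * (v * smooth_inv (u i) v)) by ring.
      rewrite mul_smooth_inv by lra. ring. }
  rewrite !sumf_minus, Hw1, <- suml_sumf, Hg1. unfold mass_above in Hshare. lra.
Qed.

Lemma entropy_le_of_forced_share {A : Type} (g : list R) (L : list A) (w u : A -> R) :
  (forall t, In t g -> 0 < t) -> suml g = 1 ->
  (forall i, In i L -> 0 < u i <= 1) -> sumf w L = 1 ->
  (forall v, 0 < v < 1 -> sumf (fun i => w i * forced_share v (u i)) L <= mass_above g v) ->
  sumf (fun t => t * - ln t) g <= sumf (fun i => w i * - ln (u i)) L + (1 + ln 2) / 2.
Proof.
  intros Hg Hg1 Hu Hw1 Hshare.
  assert (Hg' : forall t, In t g -> 0 < t <= 1).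
  { intros t Ht. split; [auto|]. rewrite <- Hg1.
    apply in_le_suml; [intros x Hx; apply Rlt_le; auto|exact Ht]. }
  assert (IA := is_RInt_sumf (fun t v => t * cut_inv t v) (fun t => t * - ln t) g 0 1
                  (fun t Ht => is_RInt_scal _ _ _ t _ (is_RInt_cut_inv t (Hg' t Ht)))).
  assert (IB := is_RInt_sumf (fun i v => w i * smooth_inv (u i) v)
                  (fun i => w i * ((1 + ln 2) / 2 - ln (u i))) L 0 1
                  (fun i Hi => is_RInt_scal _ _ _ (w i) _ (is_RInt_smooth_inv (u i) (Hu i Hi)))).
  assert (Hle := is_RInt_le _ _ 0 1 _ _ ltac:(lra) IA IB). cbv beta in Hle.
  rewrite (sumf_ext_in (fun i => w i * ((1 + ln 2) / 2 - ln (u i)))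
             (fun i => (1 + ln 2) / 2 * w i + w i * - ln (u i))), sumf_plus, sumf_scal, Hw1 in Hle
    by (intros; ring).
  enough (sumf (fun t => t * - ln t) g <= (1 + ln 2) / 2 * 1 + sumf (fun i => w i * - ln (u i)) L)
    by lra.
  apply Hle. intros v Hv. apply (cut_inv_sum_le_smooth_inv_sum g L w u v); try lra; auto.
  intros i Hi. apply Hu, Hi.
Qed.

(** * The greedy run *)

Lemma Forall2_in_r {A B : Type} (P : A -> B -> Prop) (l1 : list A) (l2 : list B) (y : B) :
  Forall2 P l1 l2 -> In y l2 -> exists x, In x l1 /\ P x y.
Proof.
  induction 1 as [|a b l1 l2 Hab _ IH]; simpl; [tauto|].
  intros [<-|Hy]; [exists a; auto|]. destruct (IH Hy) as [x [Hx Px]]. exists x; auto.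
Qed.

Lemma Forall2_Forall_r {A B : Type} (P : A -> B -> Prop) (Q : B -> Prop)
    (l1 : list A) (l2 : list B) :
  Forall2 P l1 l2 -> (forall x y, In x l1 -> P x y -> Q y) -> List.Forall Q l2.
Proof.
  induction 1 as [|a b l1 l2 Hab _ IH]; intros H; constructor.
  - apply (H a); [left; reflexivity|exact Hab].
  - apply IH. intros x y Hx. apply H. right; exact Hx.
Qed.

Lemma Forall2_compose {A B : Type} (P : A -> B -> Prop) (Q : B -> B -> Prop)
    (la : list A) (lb lc : list B) :
  Forall2 P la lb -> Forall2 Q lb lc -> (forall a b c, P a b -> Q b c -> P a c) -> Forall2 P la lc.
Proof.
  intros H1; revert lc. induction H1 as [|a b la lb Hab _ IH]; intros lc H2 H; inversion H2; subst.
  - constructor.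
  - constructor; eauto.
Qed.

Lemma Forall2_diag {A : Type} (P : A -> A -> Prop) (l : list A) :
  (forall x, In x l -> P x x) -> Forall2 P l l.
Proof.
  induction l as [|x l IH]; intros H; constructor.
  - apply H. left; reflexivity.
  - apply IH. intros y Hy. apply H. right; exact Hy.
Qed.

Lemma Forall2_nth_R (P : R -> R -> Prop) (a c : list R) (i : nat) :
  Forall2 P a c -> (i < length c)%nat -> P (nth i a 0) (nth i c 0).
Proof.
  intros H; revert i; induction H as [|x y a c Hxy _ IH]; simpl; intros i Hi; [lia|].
  destruct i; [exact Hxy|]. apply IH. lia.
Qed.

Lemma Forall2_replace_nth (P : R -> R -> Prop) (a c : list R) (i : nat) (x : R) :
  Forall2 P a c -> P (nth i a 0) x -> Forall2 P a (replace_nth i x c).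
Proof.
  intros H; revert i; induction H as [|y z a c Hyz Hac IH]; intros i Hi; destruct i; simpl in *;
    constructor; auto.
Qed.

Lemma Forall_replace_nth (P : R -> Prop) (c : list R) (i : nat) (x : R) :
  List.Forall P c -> P x -> List.Forall P (replace_nth i x c).
Proof.
  intros H; revert i; induction H as [|y c Hy Hc IH]; intros i Hx; destruct i; simpl;
    constructor; auto.
Qed.

Lemma suml_replace_nth (c : list R) (i : nat) (x : R) :
  (i < length c)%nat -> suml (replace_nth i x c) = suml c - nth i c 0 + x.
Proof.
  revert i; induction c as [|a c IH]; simpl; intros i Hi; [lia|].
  destruct i; simpl; [ring|]. change (fold_right Rplus 0 ?l) with (suml l).
  rewrite IH by lia. ring.
Qed.

Lemma maxl_ge (c : list R) (y : R) : In y c -> y <= maxl c.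
Proof.
  induction c as [|a c IH]; simpl; [tauto|]. intros [<-|H]; [apply Rmax_l|].
  eapply Rle_trans; [apply IH; exact H|apply Rmax_r].
Qed.

Lemma maxl_nonneg (c : list R) : 0 <= maxl c.
Proof. induction c as [|a c IH]; simpl; [lra|]. eapply Rle_trans; [exact IH|apply Rmax_r]. Qed.

Lemma minmax_le (st : list (list R)) (c : list R) : In c st -> minmax st <= maxl c.
Proof. destruct st as [|p st']; [destruct 1|]. exact (fold_Rmin_le maxl p st' c). Qed.

Lemma minmax_attained (st : list (list R)) : st <> [] -> exists c, In c st /\ minmax st = maxl c.
Proof. destruct st as [|p st']; [tauto|]. intros _. exact (fold_Rmin_attained maxl p st'). Qed.

Lemma minmax_nonneg (st : list (list R)) : 0 <= minmax st.
Proof.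
  destruct st as [|p st']; [simpl; lra|].
  destruct (minmax_attained (p :: st')) as [c [_ ->]]; [discriminate|]. apply maxl_nonneg.
Qed.

Lemma sub_largest_suml (r : R) (c c' : list R) : sub_largest r c c' -> suml c' = suml c - r.
Proof. intros [i [Hi [_ ->]]]. rewrite suml_replace_nth by exact Hi. ring. Qed.

Lemma sub_largest_nonneg (r : R) (c c' : list R) : sub_largest r c c' -> r <= maxl c ->
  List.Forall (fun y => 0 <= y) c -> List.Forall (fun y => 0 <= y) c'.
Proof. intros [i [_ [Hn ->]]] Hr Hc. apply Forall_replace_nth; [exact Hc|lra]. Qed.

Lemma greedy_step_nonempty (r : R) (st st' : list (list R)) :
  st <> [] -> Forall2 (sub_largest r) st st' -> st' <> [].
Proof. intros Hne Hs ->. inversion Hs; subst. contradiction. Qed.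

Lemma greedy_step_suml (r s : R) (st st' : list (list R)) :
  Forall2 (sub_largest r) st st' -> List.Forall (fun c => suml c = s) st ->
  List.Forall (fun c => suml c = s - r) st'.
Proof.
  intros Hs Hst. rewrite Forall_forall in Hst. apply (Forall2_Forall_r _ _ _ _ Hs).
  intros c c' Hc Hcc'. rewrite (sub_largest_suml _ _ _ Hcc'), Hst by exact Hc. reflexivity.
Qed.

Lemma greedy_run_output (st : list (list R)) (g : list R) : greedy_run st g ->
  forall s, st <> [] -> List.Forall (List.Forall (fun y => 0 <= y)) st ->
  List.Forall (fun c => suml c = s) st -> suml g = s /\ List.Forall (fun t => 0 < t) g.
Proof.
  induction 1 as [st Hst | st st' g Hne Hsub _ IH]; intros s Hstne Hn Hs;
    rewrite Forall_forall in Hn, Hs.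
  - destruct (minmax_attained st Hstne) as [c [Hc Ec]].
    assert (Hc0 : suml c = 0).
    { rewrite suml_sumf, (sumf_ext_in _ (fun _ => 0 * 0)), sumf_scal; [ring|].
      intros y Hy. pose proof (maxl_ge c y Hy). pose proof (Hn c Hc) as Hnc.
      rewrite Forall_forall in Hnc. pose proof (Hnc y Hy). lra. }
    rewrite <- (Hs c Hc), Hc0. split; [reflexivity|constructor].
  - pose proof (minmax_nonneg st).
    destruct (IH (s - minmax st)) as [E F].
    + exact (greedy_step_nonempty _ _ _ Hstne Hsub).
    + apply (Forall2_Forall_r _ _ _ _ Hsub). intros c c' Hc Hcc'.
      exact (sub_largest_nonneg _ _ _ Hcc' (minmax_le st c Hc) (Hn c Hc)).
    + apply (greedy_step_suml _ _ _ _ Hsub). apply Forall_forall. exact Hs.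
    + split; [simpl; change (fold_right Rplus 0 g) with (suml g); rewrite E; ring|].
      constructor; [lra|exact F].
Qed.

Definition reduced_by_large (v x y : R) : Prop := y <= x /\ (y < x -> v <= x - y).

Lemma reduced_by_large_refl (v x : R) : reduced_by_large v x x.
Proof. split; lra. Qed.

Lemma reduced_by_large_sub_largest (v r : R) (a c c' : list R) : 0 <= v <= r ->
  Forall2 (reduced_by_large v) a c -> sub_largest r c c' -> Forall2 (reduced_by_large v) a c'.
Proof.
  intros Hvr Hac [i [Hi [_ ->]]]. apply Forall2_replace_nth; [exact Hac|].
  destruct (Forall2_nth_R _ _ _ i Hac Hi) as [Hle _]. split; lra.
Qed.

Lemma mul_forced_share_le (v x y : R) : 0 < v -> reduced_by_large v x y -> y <= v ->
  x * forced_share v x <= x - y.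
Proof.
  intros Hv [Hyx Hlarge] Hy. unfold forced_share.
  destruct (Rle_dec x v); [lra|]. destruct (Rle_dec x (2 * v)).
  - specialize (Hlarge ltac:(lra)). lra.
  - replace (x * (1 - v / x)) with (x - v) by (field; lra). lra.
Qed.

Lemma sumf_forced_share_le (v : R) (a c : list R) : 0 < v ->
  Forall2 (reduced_by_large v) a c -> (forall y, In y c -> y <= v) ->
  sumf (fun x => x * forced_share v x) a <= suml a - suml c.
Proof.
  intros Hv. induction 1 as [|x y a c Hxy _ IH]; simpl; intros Hc; [lra|].
  change (fold_right Rplus 0 ?l) with (suml l).
  pose proof (mul_forced_share_le v x y Hv Hxy (Hc y (or_introl eq_refl))).
  pose proof (IH (fun z Hz => Hc z (or_intror Hz))). lra.
Qed.

(* [A] holds the initial distributions and [st] their remaining masses, with common total [s]. *)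
Lemma forced_share_at_stop (v s : R) (A st : list (list R)) : 0 < v -> st <> [] -> minmax st <= v ->
  Forall2 (Forall2 (reduced_by_large v)) A st -> List.Forall (fun c => suml c = s) st ->
  exists a, In a A /\ sumf (fun x => x * forced_share v x) a <= suml a - s.
Proof.
  intros Hv Hne Hm HA Hs.
  destruct (minmax_attained st Hne) as [c [Hc Ec]].
  destruct (Forall2_in_r _ _ _ _ HA Hc) as [a [Ha Hac]].
  exists a. split; [exact Ha|].
  rewrite Forall_forall in Hs. rewrite <- (Hs c Hc).
  apply sumf_forced_share_le; [exact Hv|exact Hac|].
  intros y Hy. pose proof (maxl_ge c y Hy). lra.
Qed.

Lemma greedy_run_forced_share (st : list (list R)) (g : list R) : greedy_run st g ->
  forall v s A, 0 < v -> st <> [] ->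
  Forall2 (Forall2 (reduced_by_large v)) A st -> List.Forall (fun c => suml c = s) st ->
  exists a, In a A /\ sumf (fun x => x * forced_share v x) a <= suml a - s + mass_above g v.
Proof.
  induction 1 as [st Hst | st st' g _ Hsub _ IH]; intros v s A Hv Hne HA Hs.
  - destruct (forced_share_at_stop v s A st Hv Hne ltac:(lra) HA Hs) as [a [Ha Hw]].
    exists a. split; [exact Ha|]. unfold mass_above; simpl. lra.
  - destruct (Rle_dec (minmax st) v) as [Hle|Hgt].
    + destruct (forced_share_at_stop v s A st Hv Hne Hle HA Hs) as [a [Ha Hw]].
      exists a. split; [exact Ha|]. pose proof (mass_above_nonneg (minmax st :: g) v). lra.
    + destruct (IH v (s - minmax st) A Hv) as [a [Ha Hw]].
      * exact (greedy_step_nonempty _ _ _ Hne Hsub).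
      * apply (Forall2_compose _ _ _ _ _ HA Hsub). intros a c c' Hac Hcc'.
        apply (reduced_by_large_sub_largest v (minmax st) a c c'); [lra|exact Hac|exact Hcc'].
      * exact (greedy_step_suml _ _ _ _ Hsub Hs).
      * exists a. split; [exact Ha|]. unfold mass_above in *; simpl.
        destruct Rle_dec; [lra|]. lra.
Qed.

Lemma greedy_profile_forced_share (S : list (list R)) (g : list R) (L : list (R * R)) (v : R) :
  S <> [] -> List.Forall is_distr S -> greedy_run S g -> 0 < v < 1 ->
  (forall phi : R -> R, is_RInt (fun x => phi (Profile S x)) 0 1
                          (sumf (fun wx => fst wx * phi (Profile S (snd wx))) L)) ->
  sumf (fun wx => fst wx * forced_share v (Profile S (snd wx))) L <= mass_above g v.
Proof.
  intros Hne HS Hrun Hv HI.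
  destruct (greedy_run_forced_share S g Hrun v 1 S) as [a [Ha Hshare]]; [lra|exact Hne| | |].
  - apply Forall2_diag. intros p _. apply Forall2_diag. intros x _. apply reduced_by_large_refl.
  - exact (Forall_impl _ (fun p Hp => proj1 (proj2 Hp)) HS).
  - rewrite Forall_forall in HS. destruct (HS a Ha) as [Hnn [Hsum _]].
    assert (Ia := is_RInt_Sketch (forced_share v) a Hnn). rewrite Hsum in Ia.
    enough (sumf (fun wx => fst wx * forced_share v (Profile S (snd wx))) L
            <= sumf (fun x => x * forced_share v x) a) by lra.
    apply (is_RInt_le _ _ 0 1 _ _ ltac:(lra) (HI (forced_share v)) Ia).
    intros x _. apply forced_share_mono; [lra|]. apply Profile_le_Sketch, Ha.
Qed.

Lemma sumf_log2_inv {A : Type} (w u : A -> R) (l : list A) : (forall i, In i l -> 0 < u i) ->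
  sumf (fun i => w i * log2 (/ u i)) l = sumf (fun i => w i * - ln (u i)) l / ln 2.
Proof.
  intros Hu. unfold Rdiv. rewrite Rmult_comm, <- sumf_scal. apply sumf_ext_in.
  intros i Hi. unfold log2. rewrite ln_Rinv by (apply Hu, Hi). unfold Rdiv. ring.
Qed.

Lemma ln_bound_to_log2 (a b : R) :
  a <= b + (1 + ln 2) / 2 -> a / ln 2 <= b / ln 2 + (1 + log2 (exp 1)) / 2.
Proof.
  intros Hab. assert (Hln2 : 0 < ln 2) by (pose proof ln_lt_2; lra).
  unfold log2. rewrite ln_exp.
  replace (b / ln 2 + (1 + 1 / ln 2) / 2) with ((b + (1 + ln 2) / 2) / ln 2) by (field; lra).
  unfold Rdiv. apply Rmult_le_compat_r; [left; apply Rinv_0_lt_compat, Hln2|exact Hab].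
Qed.

Theorem theorem3 :
  forall (S : list (list R)),
    (1 <= length S)%nat ->
    List.Forall is_distr S ->
    forall g : list R, greedy_run S g ->
    H_seq g <= H_Profile S + (1 + log2 (exp 1)) / 2.
Proof.
  intros S Hlen HS g Hrun.
  assert (Hne : S <> []) by (intros ->; simpl in Hlen; lia).
  destruct (greedy_run_output S g Hrun 1 Hne (Forall_impl _ (fun p Hp => proj1 Hp) HS)
              (Forall_impl _ (fun p Hp => proj1 (proj2 Hp)) HS)) as [Hg1 Hgpos].
  rewrite Forall_forall in Hgpos.
  destruct (is_RInt_Profile S Hne HS) as [L [Hw1 [HP HI]]].
  unfold H_Profile. rewrite (is_RInt_unique _ _ _ _ (HI (fun u => log2 (/ u)))).
  change (H_seq g) with (sumf (fun t => t * log2 (/ t)) g).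
  rewrite !sumf_log2_inv by (intros; try apply HP; auto).
  apply ln_bound_to_log2.
  apply (entropy_le_of_forced_share g L fst (fun wx => Profile S (snd wx))); auto.
  intros v Hv. apply greedy_profile_forced_share; auto.
Qed.
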